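(* Let $\mathbb{K}$ be a field of characteristic $0$, let $F(n)$ be a holonomic sequence of order $J>0$, and let $L=\sum_{i=0}^{J}a_i(n)\sigma^i\in\operatorname{ann}F(n)$ with $a_0(n)a_J(n)\neq0$. Let $a(n),b(n)\in\mathbb{K}[n]$ be such that $\frac{a(n)}{b(n)}F(n)$ is summable. Suppose that for every $h\in\mathbb{N}=\{0,1,2,\dots\}$, \[\gcd(a_0(n),a_J(n+h))=\gcd(b(n),b(n+J+h))=1\] and \[\gcd(a_0(n),b(n+J+h))=\gcd(b(n),a_J(n+h))=1.\] Then $b(n)\mid a(n)$.
   Context: $\sigma$ is the shift operator, $L(F(n))=\sum_i a_i(n)F(n+i)$, $\operatorname{ann}F(n)=\{L\in\mathbb{K}[n][\sigma]:L(F(n))=0\}$, $F$ holonomic means $\operatorname{ann}F\neq\{0\}$, and the order of $F$ is the minimal order of a nonzero element of $\operatorname{ann}F$. A holonomic sequence $G(n)$ of order $J$ is summable if $G(n)=\Delta\big(\sum_{i=0}^{J-1}u_i(n)G(n+i)\big)$ for some rational functions $u_i(n)\in\mathbb{K}(n)$, where $\Delta=\sigma-1$. *)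

From HB Require Import structures.
From mathcomp Require Import all_boot all_order all_algebra.
Set Implicit Arguments. Unset Strict Implicit. Unset Printing Implicit Defensive.
Import Order.TTheory GRing.Theory Num.Theory.
Local Open Scope ring_scope.

(* Sequences are functions nat -> K; identities between sequences are
   understood eventually (for all sufficiently large n), which is how
   identities involving rational-function coefficients (with finitely many
   poles) are meaningful. *)
Definition eventually (P : nat -> Prop) : Prop := exists N : nat, forall n, (N <= n)%N -> P n.

Definition peval {K : fieldType} (p : {poly K}) (n : nat) : K := p.[n%:R].

Definition pshift {K : fieldType} (p : {poly K}) (h : nat) : {poly K} :=
  p \Po ('X + (h%:R)%:P).

Definition apply_op {K : fieldType} (J : nat) (a : 'I_J.+1 -> {poly K})
  (F : nat -> K) (n : nat) : K :=
  \sum_(i < J.+1) peval (a i) n * F (n + i)%N.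

Definition in_ann {K : fieldType} (J : nat) (a : 'I_J.+1 -> {poly K})
  (F : nat -> K) : Prop :=
  eventually (fun n => apply_op a F n = 0).

Definition has_ann_of_order {K : fieldType} (F : nat -> K) (k : nat) : Prop :=
  exists a : 'I_k.+1 -> {poly K}, a ord_max != 0 /\ in_ann a F.

Definition holonomic_of_order {K : fieldType} (F : nat -> K) (J : nat) : Prop :=
  has_ann_of_order F J /\ (forall k, (k < J)%N -> ~ has_ann_of_order F k).

(* G holonomic of order J is summable: G = Delta(sum_{i<J} u_i(n) G(n+i)) with
   rational u_i; the u_i are written over a common denominator q <> 0,
   u_i = p_i / q. *)
Definition summable {K : fieldType} (G : nat -> K) : Prop :=
  exists J : nat, holonomic_of_order G J /\
  exists (p : 'I_J -> {poly K}) (q : {poly K}), q != 0 /\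
    let H := fun m => \sum_(i < J) (peval (p i) m / peval q m) * G (m + i)%N in
    eventually (fun n => G n = H n.+1 - H n).

From HB Require Import structures.
From mathcomp Require Import all_boot all_order all_algebra.
From Stdlib Require Import Classical.
From mathcomp Require Import ring.
Set Implicit Arguments. Unset Strict Implicit. Unset Printing Implicit Defensive.
Import Order.TTheory GRing.Theory Num.Theory.
Local Open Scope ring_scope.

(* Let r = A/B and G = r F. A summability certificate of G has order at most J,
   so G = W(n+1) - W(n) with W(n) = sum_(i<J) w_i(n) F(n+i) and w_i rational.
   Adding s L F with s(n) = w_(J-1)(n+1)/a_J(n) cancels F(n+J), leaving a relation
   of order J - 1 whose coefficients vanish by minimality of J; telescoping them
   yields the adjoint equation
     r(n+J) + sum_(k<=J) s(n+k) a_(J-k)(n+k) = 0.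
   Write s = e/d in lowest terms and clear denominators.  If d is constant, B | A.
   Otherwise let f be an irreducible factor of d, j0 the largest shift with
   f(n) | d(n+j0), and u0 the largest with g(n) := f(n+u0) | d(n+j0).  Reading the
   cleared identity at shift j0 modulo f(n), where d(n+j0) is the only factor of
   prod_k d(n+j0+k) divisible by f, and modulo g(n+J), where d(n+j0+J) is the only
   one, shows that g divides B(n+j0+J+u0) or a_J(n+j0+u0), and also B(n+j0) or
   a_0(n+j0); each of the four cases contradicts a coprimality hypothesis at h = u0. *)

Section PolyFacts.
Variable R : idomainType.
Implicit Types p q : {poly R}.

Lemma exists_irredp_dvdp q : (1 < size q)%N -> exists2 f, irreducible_poly f & f %| q.
Proof.
move: {2}(size q) (leqnn (size q)) => s; elim: s q => [|s IHs] q size_q q_gt1.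
  by move: q_gt1; rewrite ltnNge (leq_trans size_q).
have [q_irr|q_red] := classic (irreducible_poly q); first by exists q.
have [p [p_neq1 p_dvd p_neqp]] : exists p, [/\ size p != 1, p %| q & ~~ (p %= q)].
  apply: NNPP => none; apply: q_red; split=> // p p_neq1 p_dvd; apply/negPn/negP => p_neqp.
  by apply: none; exists p.
have q_neq0 : q != 0 by rewrite -size_poly_gt0 ltnW.
have p_neq0 : p != 0 by apply: contraTneq p_dvd => ->; rewrite dvd0p.
have lt_pq : (size p < size q)%N.
  by rewrite ltn_neqAle dvdp_leq // andbT; apply: contra p_neqp; rewrite dvdp_size_eqp.
have size_p : (size p <= s)%N by rewrite -ltnS (leq_trans lt_pq).
have p_gt1 : (1 < size p)%N by rewrite ltn_neqAle eq_sym p_neq1 size_poly_gt0.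
have [f f_irr f_dvd] := IHs p size_p p_gt1.
by exists f => //; apply: dvdp_trans p_dvd.
Qed.

Lemma coprimep_prodr I (r : seq I) (P : pred I) (F : I -> {poly R}) p :
  (forall i, P i -> coprimep p (F i)) -> coprimep p (\prod_(i <- r | P i) F i).
Proof.
by move=> cpF; elim/big_ind: _ => // [|x y cx cy]; [exact: coprimep1 | rewrite coprimepMr cx].
Qed.

Lemma irredp_coprime_dvdpN f p q : irreducible_poly f -> coprimep p q -> f %| p -> ~~ (f %| q).
Proof.
move=> [f_gt1 _] /coprimepP cpq f_dvdp; apply/negP => /(cpq _ f_dvdp).
by rewrite -size_poly_eq1 => /eqP f1; rewrite f1 in f_gt1.
Qed.

End PolyFacts.

Lemma sum_diag_telescope (V : zmodType) (v w : nat -> nat -> V) :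
    (forall i m, v i.+1 m = w i m.+1) ->
  forall j n, \sum_(k < j.+1) (v (j - k)%N (n + k)%N - w (j - k)%N (n + k)%N) =
              v 0%N (n + j)%N - w j n.
Proof.
move=> vw; elim=> [|j IHj] n; first by rewrite big_ord1 subn0 !addn0.
rewrite big_ord_recl subn0 addn0 vw.
under eq_bigr do rewrite lift0 subSS addnS -addSn.
by rewrite IHj -addSnnS addrC addrA subrK.
Qed.

Section PolyShift.
Variable R : idomainType.
Implicit Types (p q : {poly R}) (c : R).

Definition shiftp p c : {poly R} := p \Po ('X + c%:P).

Lemma horner_shiftp p c x : (shiftp p c).[x] = p.[x + c].
Proof. by rewrite horner_comp !hornerE. Qed.

Lemma size_shiftp p c : size (shiftp p c) = size p.
Proof. by rewrite size_comp_poly2 // size_XaddC. Qed.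

Lemma shiftp_eq0 p c : (shiftp p c == 0) = (p == 0).
Proof. by rewrite -!size_poly_eq0 size_shiftp. Qed.

Lemma lead_coef_shiftp p c : lead_coef (shiftp p c) = lead_coef p.
Proof. by rewrite lead_coef_comp ?size_XaddC // lead_coefXaddC expr1n mulr1. Qed.

Lemma shiftp_shiftp p c c' : shiftp (shiftp p c) c' = shiftp p (c + c').
Proof.
by rewrite /shiftp -comp_polyA comp_polyD comp_polyX comp_polyC -addrA -polyCD (addrC c').
Qed.

Lemma shiftp0 p : shiftp p 0 = p.
Proof. by rewrite /shiftp addr0 comp_polyXr. Qed.

Lemma shiftpK c : cancel (shiftp^~ c) (shiftp^~ (- c)).
Proof. by move=> p; rewrite shiftp_shiftp subrr shiftp0. Qed.

Lemma shiftpNK c : cancel (shiftp^~ (- c)) (shiftp^~ c).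
Proof. by move=> p; rewrite -{2}[c]opprK shiftpK. Qed.

Lemma dvdp_shiftp p q c : (shiftp p c %| shiftp q c) = (p %| q).
Proof.
apply/idP/idP; last exact: dvdp_comp_poly.
by move/(dvdp_comp_poly ('X + (- c)%:P)); rewrite -!/(shiftp _ (- c)) !shiftpK.
Qed.

Lemma eqp_shiftp p q c : (shiftp p c %= shiftp q c) = (p %= q).
Proof. by rewrite /eqp !dvdp_shiftp. Qed.

Lemma coprimep_shiftp p q c : coprimep p q -> coprimep (shiftp p c) (shiftp q c).
Proof. exact: coprimep_comp_poly. Qed.

Lemma irredp_shiftp p c : irreducible_poly p -> irreducible_poly (shiftp p c).
Proof.
case=> p_gt1 p_irr; split=> [|q q_neq1 q_dvd]; first by rewrite size_shiftp.
rewrite -(shiftpNK c q) eqp_shiftp; apply: p_irr; last by rewrite -(dvdp_shiftp _ _ c) shiftpNK.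
by rewrite size_shiftp.
Qed.

End PolyShift.

Section NatShift.
Variable K : fieldType.
Implicit Types (p q : {poly K}) (h k n : nat).

Lemma pshiftE p h : pshift p h = shiftp p h%:R.
Proof. by []. Qed.

Lemma peval_pshift p h n : peval (pshift p h) n = peval p (n + h).
Proof. by rewrite /peval horner_shiftp natrD. Qed.

Lemma pevalD p q n : peval (p + q) n = peval p n + peval q n.
Proof. exact: hornerD. Qed.

Lemma pevalM p q n : peval (p * q) n = peval p n * peval q n.
Proof. exact: hornerM. Qed.

Lemma peval_sum I (r : seq I) (P : pred I) (F : I -> {poly K}) n :
  peval (\sum_(i <- r | P i) F i) n = \sum_(i <- r | P i) peval (F i) n.
Proof. exact: horner_sum. Qed.

Lemma peval_prod I (r : seq I) (P : pred I) (F : I -> {poly K}) n :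
  peval (\prod_(i <- r | P i) F i) n = \prod_(i <- r | P i) peval (F i) n.
Proof. exact: horner_prod. Qed.

Lemma pshift_pshift p h k : pshift (pshift p h) k = pshift p (h + k).
Proof. by rewrite !pshiftE shiftp_shiftp natrD. Qed.

Lemma pshift0 p : pshift p 0 = p.
Proof. exact: shiftp0. Qed.

Lemma pshiftC (c : K) h : pshift c%:P h = c%:P.
Proof. exact: comp_polyC. Qed.

Lemma dvdp_pshift p q h : (pshift p h %| pshift q h) = (p %| q).
Proof. exact: dvdp_shiftp. Qed.

End NatShift.

Section Eventually.
Implicit Types P Q : nat -> Prop.

Lemma eventually_and P Q :
  eventually P -> eventually Q -> eventually (fun n => P n /\ Q n).
Proof.
move=> [N1 HP] [N2 HQ]; exists (maxn N1 N2) => n; rewrite geq_max => /andP[n1 n2].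
by split; [apply: HP | apply: HQ].
Qed.

Lemma eventually_mono P Q : (forall n, P n -> Q n) -> eventually P -> eventually Q.
Proof. by move=> PQ [N HP]; exists N => n /HP /PQ. Qed.

Lemma eventually_shift P k : eventually P -> eventually (fun n => P (n + k)%N).
Proof. by move=> [N HP]; exists N => n n_ge; apply: HP; rewrite (leq_trans n_ge) ?leq_addr. Qed.

Lemma eventually_forall_ltn m (P : nat -> nat -> Prop) :
  (forall i, (i < m)%N -> eventually (P i)) ->
  eventually (fun n => forall i, (i < m)%N -> P i n).
Proof.
elim: m => [|m IHm] HP; first by exists 0%N.
have := eventually_and (IHm (fun i lt_im => HP i (ltnW lt_im))) (HP m (ltnSn m)).
apply: eventually_mono => n [Hlt Hm] i; rewrite ltnS leq_eqVlt => /predU1P[-> //|].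
exact: Hlt.
Qed.

End Eventually.

Section CharZero.
Variables (K : fieldType) (Kchar0 : [pchar K] =i pred0).
Implicit Types q : {poly K}.

Lemma pchar0_natr_inj : injective (fun n : nat => n%:R : K).
Proof.
move=> m n /= eq_mn; wlog le_mn : m n eq_mn / (m <= n)%N => [W|].
  by case: (leqP m n) => [|/ltnW] ?; [|symmetry]; apply: W.
by apply/eqP; rewrite eqn_leq le_mn -subn_eq0 -(pcharf0P K).1 // natrB // eq_mn subrr eqxx.
Qed.

Lemma eventually_peval_neq0 q : q != 0 -> eventually (fun n => peval q n != 0).
Proof.
elim: {q}(size q) {-2}q (erefl (size q)) => [|s IHs] q size_q q_neq0.
  by move: q_neq0; rewrite -size_poly_eq0 size_q.
have [[n0 root_n0]|no_root] := classic (exists n0 : nat, root q n0%:R); last first.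
  by exists 0%N => n _; apply/negP => /eqP qn0; apply: no_root; exists n; apply/eqP.
have [q' Dq] := factor_theorem _ _ root_n0.
have q'_neq0 : q' != 0 by apply: contraNneq q_neq0 => q'0; rewrite Dq q'0 mul0r.
have /IHs /(_ q'_neq0) [N HN] : size q' = s.
  by move: size_q; rewrite Dq size_Mmonic ?monicXsubC ?size_XsubC // addn2 => -[].
exists (maxn N n0.+1) => n; rewrite geq_max => /andP[/HN q'n lt_n0n].
rewrite /peval Dq hornerM mulf_neq0 // hornerXsubC subr_eq0.
by apply: contraTneq lt_n0n => /pchar0_natr_inj ->; rewrite ltnn.
Qed.

Lemma poly_eq0_eventually q : eventually (fun n => peval q n = 0) -> q = 0.
Proof.
move=> q_ev0; apply/eqP/negPn/negP => /eventually_peval_neq0 q_evn0.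
by have [N HN] := eventually_and q_ev0 q_evn0; case: (HN N (leqnn N)) => -> /eqP.
Qed.

End CharZero.

Section ShiftedFactors.
Variables (K : fieldType) (Kchar0 : [pchar K] =i pred0).
Implicit Types (f d : {poly K}) (c : K).

Lemma shiftp_fixed_size f c : c != 0 -> shiftp f c = f -> (size f <= 1)%N.
Proof.
move=> c_neq0 fc_eq.
have f_per n : f.[c * n%:R] = f.[0].
  elim: n => [|n IHn]; first by rewrite mulr0.
  by rewrite -IHn -[in RHS]fc_eq horner_shiftp mulrSr mulrDr mulr1.
have : (f - f.[0]%:P) \Po (c *: 'X) = 0.
  apply: (poly_eq0_eventually Kchar0); exists 0%N => n _.
  by rewrite /peval horner_comp !hornerE f_per subrr.
move/eqP; rewrite comp_poly2_eq0 ?size_scale ?size_polyX // subr_eq0 => /eqP ->.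
exact: size_polyC_leq1.
Qed.

Lemma coprimep_irredp_shiftp f c c' :
  irreducible_poly f -> c != c' -> coprimep (shiftp f c) (shiftp f c').
Proof.
move=> f_irr neq_cc'; have fc_irr := irredp_shiftp c f_irr.
rewrite irreducible_poly_coprime //; apply/negP => dvd_cc'.
have : shiftp f (c - c') %= f.
  rewrite -(eqp_shiftp _ _ c') shiftp_shiftp subrK.
  by apply: (irredp_shiftp c' f_irr); rewrite // size_shiftp neq_ltn f_irr.1 orbT.
move/eqp_eq; rewrite lead_coef_shiftp => /scalerI fcc'_eq.
have /(shiftp_fixed_size _) : shiftp f (c - c') = f.
  by apply: fcc'_eq; rewrite lead_coef_eq0 irredp_neq0.
by rewrite subr_eq0 leqNgt f_irr.1 => /(_ neq_cc').
Qed.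

Lemma shiftp_dvdp_bounded f d c : irreducible_poly f -> d != 0 -> c != 0 ->
  exists M, forall u : nat, shiftp f (u%:R * c) %| d -> (u < M)%N.
Proof.
move=> f_irr + c_neq0; move: {2}(size d) (leqnn (size d)) => s.
elim: s d => [|s IHs] d size_d d_neq0.
  by move: d_neq0; rewrite -size_poly_eq0 -leqn0 size_d.
have [[u0 /dvdpP[g Dd]]|none] := classic (exists u0 : nat, shiftp f (u0%:R * c) %| d); last first.
  by exists 0%N => u dvd_u; case: none; exists u.
set f0 := shiftp f _ in Dd; have f0_gt1 : (1 < size f0)%N by rewrite size_shiftp f_irr.1.
have g_neq0 : g != 0 by apply: contraNneq d_neq0 => g0; rewrite Dd g0 mul0r.
have /IHs /(_ g_neq0) [M HM] : (size g <= s)%N.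
  suff: (size g < size d)%N by move/leq_trans/(_ size_d).
  have f0_neq0 : f0 != 0 by rewrite -size_poly_gt0 ltnW.
  rewrite Dd size_mul //; case: (size f0) f0_gt1 => [|[|k]] // _.
  by rewrite addnS /= addnS ltnS leq_addr.
exists (maxn M u0.+1) => u; rewrite leq_max; have [-> _|neq_uu0] := eqVneq u u0.
  by rewrite ltnSn orbT.
rewrite Dd Gauss_dvdpl => [/HM -> //|]; apply: coprimep_irredp_shiftp => //.
by rewrite (inj_eq (mulIf c_neq0)) (inj_eq (pchar0_natr_inj Kchar0)).
Qed.

Lemma pshift_dvdp_max f d : irreducible_poly f -> d != 0 -> f %| d ->
  exists2 u0, pshift f u0 %| d & forall u, pshift f u %| d -> (u <= u0)%N.
Proof.
move=> f_irr d_neq0 f_dvd; have [M HM] := shiftp_dvdp_bounded f_irr d_neq0 (oner_neq0 K).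
have ex_u : exists u, pshift f u %| d by exists 0%N; rewrite pshift0.
have ub_u u : pshift f u %| d -> (u <= M)%N.
  by rewrite pshiftE -[u%:R]mulr1 => /HM /ltnW.
by case: (ex_maxnP ex_u ub_u) => u0; exists u0.
Qed.

Lemma dvdp_pshift_max f d : irreducible_poly f -> d != 0 -> f %| d ->
  exists2 j0, f %| pshift d j0 & forall j, f %| pshift d j -> (j <= j0)%N.
Proof.
move=> f_irr d_neq0 f_dvd.
have N1_neq0 : (-1 : K) != 0 by rewrite oppr_eq0 oner_neq0.
have [M HM] := shiftp_dvdp_bounded f_irr d_neq0 N1_neq0.
have ex_j : exists j, f %| pshift d j by exists 0%N; rewrite pshift0.
have ub_j j : f %| pshift d j -> (j <= M)%N.
  by rewrite pshiftE -(dvdp_shiftp _ _ (- j%:R)) shiftpK -mulrN1 => /HM /ltnW.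
by case: (ex_maxnP ex_j ub_j) => j0; exists j0.
Qed.

End ShiftedFactors.

Section RationalSequences.
Variables (K : fieldType) (Kchar0 : [pchar K] =i pred0).
Implicit Types (f g : nat -> K) (P Q : {poly K}).

Definition rational_seq f :=
  exists P Q, Q != 0 /\ eventually (fun n => f n = peval P n / peval Q n).

Lemma rational_seq_ext f g :
  rational_seq f -> eventually (fun n => f n = g n) -> rational_seq g.
Proof.
move=> [P [Q [Q_neq0 fPQ]]] fg; exists P, Q; split=> //.
by apply: eventually_mono (eventually_and fPQ fg) => n [<- <-].
Qed.

Lemma rational_seq_poly P : rational_seq (peval P).
Proof.
exists P, 1; split; first exact: oner_neq0.
by exists 0%N => n _; rewrite /peval hornerC divr1.
Qed.

Lemma rational_seq_shift f k : rational_seq f -> rational_seq (fun n => f (n + k)%N).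
Proof.
move=> [P [Q [Q_neq0 fPQ]]]; exists (pshift P k), (pshift Q k); split.
  by rewrite pshiftE shiftp_eq0.
by apply: eventually_mono (eventually_shift k fPQ) => n ->; rewrite !peval_pshift.
Qed.

Lemma rational_seq_opp f : rational_seq f -> rational_seq (fun n => - f n).
Proof.
move=> [P [Q [Q_neq0 fPQ]]]; exists (- P), Q; split=> //.
by apply: eventually_mono fPQ => n ->; rewrite /peval hornerN mulNr.
Qed.

Lemma rational_seq_mul f g :
  rational_seq f -> rational_seq g -> rational_seq (fun n => f n * g n).
Proof.
move=> [P1 [Q1 [Q1_neq0 fPQ]]] [P2 [Q2 [Q2_neq0 gPQ]]].
exists (P1 * P2), (Q1 * Q2); split; first by rewrite mulf_neq0.
apply: eventually_mono (eventually_and fPQ gPQ) => n [-> ->].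
by rewrite /peval !hornerM invfM mulrACA.
Qed.

Lemma rational_seq_inv f : rational_seq f -> rational_seq (fun n => (f n)^-1).
Proof.
move=> [P [Q [Q_neq0 fPQ]]]; have [P0|P_neq0] := eqVneq P 0.
  apply: rational_seq_ext (rational_seq_poly 0) _; apply: eventually_mono fPQ => n ->.
  by rewrite P0 /peval !horner0 mul0r invr0.
exists Q, P; split=> //; apply: eventually_mono fPQ => n ->.
by rewrite invfM invrK mulrC.
Qed.

Lemma rational_seq_div f g :
  rational_seq f -> rational_seq g -> rational_seq (fun n => f n / g n).
Proof. by move=> rf /rational_seq_inv; apply: rational_seq_mul. Qed.

Lemma rational_seq_add f g :
  rational_seq f -> rational_seq g -> rational_seq (fun n => f n + g n).
Proof.
move=> [P1 [Q1 [Q1_neq0 fPQ]]] [P2 [Q2 [Q2_neq0 gPQ]]].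
exists (P1 * Q2 + P2 * Q1), (Q1 * Q2); split; first by rewrite mulf_neq0.
have Q12_ev := eventually_and (eventually_peval_neq0 Kchar0 Q1_neq0)
                             (eventually_peval_neq0 Kchar0 Q2_neq0).
apply: eventually_mono (eventually_and (eventually_and fPQ gPQ) Q12_ev).
move=> n [[-> ->]]; rewrite /peval !(hornerM, hornerD) => -[Q1n Q2n].
by field; rewrite Q1n Q2n.
Qed.

Lemma rational_seq_common_denom m (c : nat -> nat -> K) :
    (forall i, (i < m)%N -> rational_seq (c i)) ->
  exists2 Q, Q != 0 & exists P : nat -> {poly K},
    eventually (fun n => forall i, (i < m)%N -> c i n * peval Q n = peval (P i) n).
Proof.
elim: m => [|m IHm] rc.
  by exists 1; [exact: oner_neq0 | exists (fun=> 0); exists 0%N].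
have [Q Q_neq0 [P cPQ]] := IHm (fun i lt_im => rc i (ltnW lt_im)).
have [Pm [Qm [Qm_neq0 cPQm]]] := rc m (ltnSn m).
exists (Q * Qm); first by rewrite mulf_neq0.
exists (fun i => if (i < m)%N then P i * Qm else Pm * Q).
have Qm_ev := eventually_peval_neq0 Kchar0 Qm_neq0.
apply: eventually_mono (eventually_and (eventually_and cPQ cPQm) Qm_ev).
move=> n [[cn cmn] Qmn] i; rewrite ltnS leq_eqVlt => /predU1P[->|lt_im].
  by rewrite ltnn cmn /peval !hornerM; field.
by rewrite lt_im /peval !hornerM mulrA cn.
Qed.

Lemma rational_seq_coprime_repr f : rational_seq f ->
  exists e d : {poly K}, [/\ d != 0, coprimep e d &
    eventually (fun n => f n = peval e n / peval d n /\ peval d n != 0)].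
Proof.
move=> [P [Q [Q_neq0 fPQ]]]; pose g := gcdp P Q.
have DP : P = P %/ g * g by rewrite divpK // dvdp_gcdl.
have DQ : Q = Q %/ g * g by rewrite divpK // dvdp_gcdr.
have d_neq0 : Q %/ g != 0 by apply: contraNneq Q_neq0 => Qg0; rewrite DQ Qg0 mul0r.
exists (P %/ g), (Q %/ g); split=> //; first by rewrite coprimep_div_gcd // Q_neq0 orbT.
apply: eventually_mono (eventually_and fPQ (eventually_peval_neq0 Kchar0 Q_neq0)) => n [-> Qn].
move: Qn; rewrite {1}DQ /peval hornerM mulf_eq0 negb_or => /andP[dn gn].
by split=> //; rewrite {1}DP {1}DQ !hornerM; field; rewrite dn gn.
Qed.

End RationalSequences.

Section Holonomic.
Variables (K : fieldType) (Kchar0 : [pchar K] =i pred0).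

Lemma holonomic_poly_relation (F : nat -> K) J m (P : nat -> {poly K}) :
    holonomic_of_order F J -> (m <= J)%N ->
    eventually (fun n => \sum_(i < m) peval (P i) n * F (n + i)%N = 0) ->
  forall i, (i < m)%N -> P i = 0.
Proof.
move=> hF; elim: m => [//|m IHm] le_mJ PF0 i.
have [Pm0|Pm_neq0] := eqVneq (P m) 0; last first.
  by case: (hF.2 m le_mJ); exists (fun i : 'I_m.+1 => P i).
rewrite ltnS leq_eqVlt => /predU1P[-> //|]; apply: IHm (ltnW le_mJ) _ i.
by apply: eventually_mono PF0 => n; rewrite big_ord_recr /= Pm0 /peval horner0 mul0r addr0.
Qed.

Lemma holonomic_rational_relation (F : nat -> K) J m (c : nat -> nat -> K) :
    holonomic_of_order F J -> (m <= J)%N ->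
    (forall i, (i < m)%N -> rational_seq (c i)) ->
    eventually (fun n => \sum_(i < m) c i n * F (n + i)%N = 0) ->
  eventually (fun n => forall i, (i < m)%N -> c i n = 0).
Proof.
move=> hF le_mJ rc cF0; have [Q Q_neq0 [P cQP]] := rational_seq_common_denom Kchar0 rc.
have PF0 : eventually (fun n => \sum_(i < m) peval (P i) n * F (n + i)%N = 0).
  apply: eventually_mono (eventually_and cF0 cQP) => n [cFn cQPn].
  transitivity (peval Q n * \sum_(i < m) c i n * F (n + i)%N); last by rewrite cFn mulr0.
  by rewrite mulr_sumr; apply: eq_bigr => i _; rewrite -cQPn // mulrAC mulrC.
have P0 := holonomic_poly_relation hF le_mJ PF0.
apply: eventually_mono (eventually_and cQP (eventually_peval_neq0 Kchar0 Q_neq0)).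
move=> n [cQPn Qn] i lt_im; apply: (mulIf Qn).
by rewrite cQPn // P0 // /peval horner0 mul0r.
Qed.

Lemma has_ann_of_order_mul_rational (F : nat -> K) J (A B : {poly K}) :
    A != 0 -> B != 0 -> has_ann_of_order F J ->
  has_ann_of_order (fun n => peval A n / peval B n * F n) J.
Proof.
move=> A_neq0 B_neq0 [a [aJ_neq0 aF0]].
pose c i n := peval (a (inord i)) n * (peval B (n + i)%N / peval A (n + i)%N).
have rc i : (i < J.+1)%N -> rational_seq (c i).
  move=> _; apply: rational_seq_mul; first exact: rational_seq_poly.
  exact: rational_seq_div (rational_seq_shift i (rational_seq_poly B))
                          (rational_seq_shift i (rational_seq_poly A)).
have [Q Q_neq0 [P cQP]] := rational_seq_common_denom Kchar0 rc.
have AB_ev : eventually (fun n => forall i, (i < J.+1)%N ->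
    peval A (n + i)%N != 0 /\ peval B (n + i)%N != 0).
  apply: eventually_forall_ltn => i _.
  exact: eventually_shift i (eventually_and (eventually_peval_neq0 Kchar0 A_neq0)
                                            (eventually_peval_neq0 Kchar0 B_neq0)).
exists (fun i : 'I_J.+1 => P i); split.
  apply: contraNneq Q_neq0 => PJ0; apply/eqP/(poly_eq0_eventually Kchar0).
  have aJ_ev := eventually_peval_neq0 Kchar0 aJ_neq0.
  apply: eventually_mono (eventually_and (eventually_and cQP AB_ev) aJ_ev).
  move=> n [[cQPn ABn] aJn]; have [An Bn] := ABn J (ltnSn J).
  move: (cQPn J (ltnSn J)); rewrite /= PJ0 /peval horner0 /c.
  have -> : inord J = ord_max :> 'I_J.+1 by apply: val_inj; rewrite /= inordK.
  move/eqP; rewrite !mulf_eq0 invr_eq0 (negbTE aJn) (negbTE An) (negbTE Bn).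
  by move/eqP.
apply: eventually_mono (eventually_and (eventually_and cQP AB_ev) aF0) => n [[cQPn ABn] aFn].
rewrite /apply_op; transitivity (peval Q n * apply_op a F n); last by rewrite aFn mulr0.
rewrite mulr_sumr; apply: eq_bigr => i _; have [An Bn] := ABn i (ltn_ord i).
rewrite -cQPn // /c inord_val; field.
by rewrite An Bn.
Qed.

Lemma holonomic_order_mul_rational_le (F : nat -> K) J J' (A B : {poly K}) :
    A != 0 -> B != 0 -> holonomic_of_order F J ->
    holonomic_of_order (fun n => peval A n / peval B n * F n) J' ->
  (J' <= J)%N.
Proof.
move=> A_neq0 B_neq0 hF hG; rewrite leqNgt; apply/negP => lt_JJ'.
exact: hG.2 J lt_JJ' (has_ann_of_order_mul_rational A_neq0 B_neq0 hF.1).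
Qed.

End Holonomic.

Section Summability.
Variables (K : fieldType) (Kchar0 : [pchar K] =i pred0).

Lemma summable_certificate (F : nat -> K) J (A B : {poly K}) :
    A != 0 -> B != 0 -> holonomic_of_order F J ->
    summable (fun n => peval A n / peval B n * F n) ->
  exists w : nat -> nat -> K, [/\ forall i, rational_seq (w i),
    forall i m, (J <= i)%N -> w i m = 0 &
    eventually (fun n => peval A n / peval B n * F n =
      \sum_(i < J) w i n.+1 * F (n.+1 + i)%N - \sum_(i < J) w i n * F (n + i)%N)].
Proof.
move=> A_neq0 B_neq0 hF [J' [hG [p [q [q_neq0 GH]]]]].
have le_J'J := holonomic_order_mul_rational_le Kchar0 A_neq0 B_neq0 hF hG.
pose u i := peval (if insub i is Some i' then p i' else 0).
pose w i n := u i n / peval q n * (peval A (n + i)%N / peval B (n + i)%N).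
exists w; split.
- move=> i; apply: rational_seq_mul (rational_seq_div _ _) _; try exact: rational_seq_poly.
  exact: rational_seq_div (rational_seq_shift i (rational_seq_poly A))
                          (rational_seq_shift i (rational_seq_poly B)).
- by move=> i m le_Ji; rewrite /w /u insubN ?ltnNge ?(leq_trans le_J'J) // /peval horner0 !mul0r.
have HW m : \sum_(i < J') peval (p i) m / peval q m *
            (peval A (m + i)%N / peval B (m + i)%N * F (m + i)%N) =
            \sum_(i < J) w i m * F (m + i)%N.
  transitivity (\sum_(i < J') w i m * F (m + i)%N).
    by apply: eq_bigr => i _; rewrite /w /u valK mulrA.
  rewrite (big_ord_widen J (fun i => w i m * F (m + i)%N) le_J'J) big_mkcond /=.
  apply: eq_bigr => i _; case: ifPn => // lt_J'i.
  by rewrite /w /u insubN // /peval horner0 !mul0r.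
by apply: eventually_mono GH => n /=; rewrite !HW.
Qed.

Lemma adjoint_equation (F : nat -> K) J (an : nat -> {poly K}) (r : nat -> K)
    (w : nat -> nat -> K) :
    holonomic_of_order F J.+1 -> an J.+1 != 0 ->
    eventually (fun n => \sum_(i < J.+2) peval (an i) n * F (n + i)%N = 0) ->
    rational_seq r -> (forall i, rational_seq (w i)) -> (forall m, w J.+1 m = 0) ->
    eventually (fun n => r n * F n = \sum_(i < J.+1) w i n.+1 * F (n.+1 + i)%N
                                    - \sum_(i < J.+1) w i n * F (n + i)%N) ->
  exists2 s, rational_seq s & eventually (fun n =>
    r (n + J.+1)%N + \sum_(k < J.+2) s (n + k)%N * peval (an (J.+1 - k)%N) (n + k)%N = 0).
Proof.
move=> hF aJ_neq0 aF0 rr rw wJ0 rFW.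
(* [c i n] is the coefficient of [F (n + i)] in  W n - W n.+1 + r n F n + s n (L F)(n),
   with W the certificate; [s] is chosen so that the top coefficient vanishes. *)
pose s n := w J n.+1 / peval (an J.+1) n.
pose v i m := if i is k.+1 then w k m.+1 else - r m.
pose c i n := w i n - v i n + s n * peval (an i) n.
have rw1 i : rational_seq (fun n => w i n.+1).
  by apply: rational_seq_ext (rational_seq_shift 1 (rw i)) _; exists 0%N => n _; rewrite addn1.
have rs : rational_seq s := rational_seq_div (rw1 J) (rational_seq_poly (an J.+1)).
have rv i : rational_seq (v i) by case: i => [|i]; [exact: rational_seq_opp | exact: rw1].
have rc i : rational_seq (c i).
  exact (rational_seq_add Kchar0 (rational_seq_add Kchar0 (rw i) (rational_seq_opp (rv i)))
                           (rational_seq_mul rs (rational_seq_poly (an i)))).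
have cJ0 : eventually (fun n => c J.+1 n = 0).
  apply: eventually_mono (eventually_peval_neq0 Kchar0 aJ_neq0) => n aJn.
  by rewrite /c /v /s wJ0 divfK // sub0r addNr.
have cF0 : eventually (fun n => \sum_(i < J.+1) c i n * F (n + i)%N = 0).
  apply: eventually_mono (eventually_and (eventually_and rFW aF0) cJ0).
  move=> n [[rFWn aFn] cJn].
  suff: \sum_(i < J.+2) c i n * F (n + i)%N = 0.
    by rewrite big_ord_recr /= cJn mul0r addr0.
  rewrite /c; under eq_bigr do rewrite mulrDl mulrBl -mulrA.
  rewrite !big_split /= sumrN -mulr_sumr aFn mulr0 addr0.
  rewrite big_ord_recr /= wJ0 mul0r addr0 [X in _ - X]big_ord_recl /= addn0.
  under [X in - (_ + X)]eq_bigr => i _ do rewrite add0n -[bump 0 i]/(i.+1) addnS -addSn.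
  by rewrite mulNr rFWn opprB subrK subrr.
have c0 : eventually (fun n => forall i, (i < J.+2)%N -> c i n = 0).
  have cF := holonomic_rational_relation Kchar0 hF (leqnn J.+1) (fun i _ => rc i) cF0.
  apply: eventually_mono (eventually_and cF cJ0) => n [cn cJn] i.
  by rewrite ltnS leq_eqVlt => /predU1P[-> //|]; apply: cn.
have vw i m : v i.+1 m = w i m.+1 by [].
exists s => //; have [N HN] := c0; exists N => n le_Nn.
have tel := sum_diag_telescope vw J.+1 n; rewrite wJ0 subr0 in tel.
apply/eqP; rewrite addrC addr_eq0 -[- r _]/(v 0%N (n + J.+1)%N) -tel; apply/eqP.
apply: eq_bigr => k _; apply/eqP; rewrite -subr_eq0 opprB addrC.
rewrite -[_ + _]/(c (J.+1 - k)%N (n + k)%N) HN ?eqxx // ?ltnS ?leq_subr //.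
by rewrite (leq_trans le_Nn (leq_addr _ _)).
Qed.

End Summability.

Section AdjointIdentity.
Variables (K : fieldType) (Kchar0 : [pchar K] =i pred0).
Variables (J : nat) (an : nat -> {poly K}) (A B : {poly K}).

(* The adjoint equation with s = e/d, multiplied by B(n+J) prod_k d(n+k) and shifted
   by t. *)
Definition adjoint_identity (e d : {poly K}) := forall t : nat,
  pshift A (J + t) * \prod_(k < J.+1) pshift d (k + t) =
  - (pshift B (J + t) * \sum_(k < J.+1) pshift (an (J - k)) (k + t) * pshift e (k + t) *
                                         \prod_(j < J.+1 | j != k) pshift d (j + t)).

Lemma adjoint_identity_of_equation s : B != 0 -> rational_seq s ->
    eventually (fun n => peval A (n + J)%N / peval B (n + J)%N +
      \sum_(k < J.+1) s (n + k)%N * peval (an (J - k)) (n + k)%N = 0) ->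
  exists e d, [/\ d != 0, coprimep e d & adjoint_identity e d].
Proof.
move=> B_neq0 /(rational_seq_coprime_repr Kchar0) [e [d [d_neq0 ced sed]]] adj.
exists e, d; split=> // t; apply/eqP; rewrite -addr_eq0; apply/eqP.
apply: (poly_eq0_eventually Kchar0).
have sed_ev := eventually_forall_ltn (fun k (_ : (k < J.+1)%N) => eventually_shift k sed).
have B_ev := eventually_shift J (eventually_peval_neq0 Kchar0 B_neq0).
apply: eventually_mono (eventually_shift t (eventually_and adj (eventually_and sed_ev B_ev))).
move=> n [adj_n [sed_n Bn]]; set m := (n + t)%N in adj_n sed_n Bn.
have idx k : (n + (k + t) = m + k)%N by rewrite addnA addnAC.
have eval_prod (P : pred 'I_J.+1) : peval (\prod_(j < J.+1 | P j) pshift d (j + t)) n =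
    \prod_(j < J.+1 | P j) peval d (m + j)%N.
  by rewrite peval_prod; apply: eq_bigr => j _; rewrite peval_pshift idx.
rewrite pevalD !pevalM eval_prod peval_sum !peval_pshift idx.
set D := \prod_(j < J.+1) peval d (m + j)%N.
under eq_bigr do rewrite !pevalM eval_prod !peval_pshift !idx.
have -> : \sum_(k < J.+1) peval (an (J - k)) (m + k)%N * peval e (m + k)%N *
                         \prod_(j < J.+1 | j != k) peval d (m + j)%N =
          D * \sum_(k < J.+1) s (m + k)%N * peval (an (J - k)) (m + k)%N.
  rewrite mulr_sumr; apply: eq_bigr => k _; have [-> dk] := sed_n k (ltn_ord k).
  by rewrite /D [in RHS](bigD1 k) //=; field.
move/eqP: adj_n; rewrite addrC addr_eq0 => /eqP ->.
by field.
Qed.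

Variables (e d : {poly K}).
Hypotheses (hI : adjoint_identity e d) (ced : coprimep e d).

Lemma adjoint_identity_isolated_factor p (k0 : 'I_J.+1) t : irreducible_poly p ->
    p %| pshift d (k0 + t) -> (forall j : 'I_J.+1, j != k0 -> ~~ (p %| pshift d (j + t))) ->
  p %| pshift B (J + t) \/ p %| pshift (an (J - k0)) (k0 + t).
Proof.
move=> p_irr p_dk0 p_ndj.
have : p %| pshift A (J + t) * \prod_(k < J.+1) pshift d (k + t).
  by rewrite dvdp_mull // (bigD1 k0) //= dvdp_mulr.
rewrite hI dvdpNr (bigD1 k0) //= mulrDr dvdp_addl; last first.
  apply: dvdp_mull; apply: (big_ind (fun x => p %| x)) => [|x y|k neq_kk0].
  - exact: dvdp0.
  - exact: dvdp_add.
  by apply: dvdp_mull; rewrite (bigD1 k0) 1?eq_sym //= dvdp_mulr.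
move=> p_dvd; have [|p_nB] := boolP (p %| pshift B (J + t)); [by left | right].
have p_ne : ~~ (p %| pshift e (k0 + t)).
  by apply: (irredp_coprime_dvdpN p_irr _ p_dk0); rewrite coprimep_shiftp // coprimep_sym.
have p_nprod : coprimep p (\prod_(j < J.+1 | j != k0) pshift d (j + t)).
  by apply: coprimep_prodr => j neq_jk0; rewrite irreducible_poly_coprime ?p_ndj.
move: p_dvd; rewrite Gauss_dvdpr ?irreducible_poly_coprime // Gauss_dvdpl //.
by rewrite Gauss_dvdpl // irreducible_poly_coprime.
Qed.

Lemma adjoint_identity_lowest_factor f t : irreducible_poly f -> f %| pshift d t ->
    (forall j, f %| pshift d (j + t) -> j = 0%N) ->
  f %| pshift B (J + t) \/ f %| pshift (an J) t.
Proof.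
move=> f_irr f_dt f_min; rewrite -[in X in _ \/ X](subn0 J).
apply: (adjoint_identity_isolated_factor (k0 := ord0)) => // j neq_j0.
by apply/negP => /f_min j_eq0; case/eqP: neq_j0; apply: val_inj.
Qed.

Lemma adjoint_identity_highest_factor g t : irreducible_poly g -> g %| pshift d t ->
    (forall u, pshift g u %| pshift d t -> u = 0%N) ->
  g %| pshift B t \/ g %| pshift (an 0) t.
Proof.
move=> g_irr g_dt g_max.
have shJ X : pshift X (J + t) = pshift (pshift X t) J by rewrite pshift_pshift addnC.
have gJ_irr : irreducible_poly (pshift g J) by apply: irredp_shiftp.
have := adjoint_identity_isolated_factor (k0 := ord_max) (t := t) gJ_irr.
rewrite /= subnn !shJ !dvdp_pshift; apply=> // j neq_jJ.
have lt_jJ : (j < J)%N.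
  rewrite ltn_neqAle -ltnS ltn_ord andbT; apply: contra neq_jJ => /eqP eq_jJ.
  by apply/eqP/val_inj.
rewrite -[X in pshift g X](subnK (ltnW lt_jJ)) -pshift_pshift addnC -pshift_pshift dvdp_pshift.
by apply/negP => /g_max /eqP; rewrite subn_eq0 leqNgt lt_jJ.
Qed.

Lemma adjoint_identity_const_dvdp : d != 0 -> (size d <= 1)%N -> B %| A.
Proof.
move=> d_neq0 /size1_polyC Dd; set c := d`_0 in Dd.
have c_neq0 : c != 0 by apply: contraNneq d_neq0 => c0; rewrite Dd c0.
have : \prod_(k < J.+1) pshift d (k + 0) = (c ^+ J.+1)%:P.
  by rewrite Dd; under eq_bigr do rewrite pshiftC; rewrite prodr_const card_ord rmorphXn.
move: (hI 0%N) => /[swap] -> hI0.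
have : pshift B (J + 0) %| pshift A (J + 0) * (c ^+ J.+1)%:P by rewrite hI0 dvdpNr dvdp_mulIl.
by rewrite mulrC mul_polyC dvdpZr ?expf_neq0 // dvdp_pshift.
Qed.

Lemma adjoint_identity_dvdp : d != 0 ->
    (forall h, coprimep (an 0) (pshift (an J) h)) ->
    (forall h, coprimep B (pshift B (J + h))) ->
    (forall h, coprimep (an 0) (pshift B (J + h))) ->
    (forall h, coprimep B (pshift (an J) h)) ->
  B %| A.
Proof.
move=> d_neq0 h1 h2 h3 h4; have [|d_gt1] := leqP (size d) 1.
  exact: adjoint_identity_const_dvdp.
have [f f_irr f_dvd] := exists_irredp_dvdp d_gt1.
have [j0 f_dj0 j0_max] := dvdp_pshift_max Kchar0 f_irr d_neq0 f_dvd.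
have dj0_neq0 : pshift d j0 != 0 by rewrite pshiftE shiftp_eq0.
have [u0 fu0_dj0 u0_max] := pshift_dvdp_max Kchar0 f_irr dj0_neq0 f_dj0.
set g := pshift f u0; have g_irr : irreducible_poly g by apply: irredp_shiftp.
have low : g %| pshift (pshift B (J + u0)) j0 \/ g %| pshift (pshift (an J) u0) j0.
  have shift_u0 X k : f %| pshift X (k + j0) -> g %| pshift (pshift X (k + u0)) j0.
    by rewrite -(dvdp_pshift _ _ u0) !pshift_pshift addnAC.
  have f_min j : f %| pshift d (j + j0) -> j = 0%N.
    by move/j0_max; rewrite -{2}(add0n j0) leq_add2r leqn0 => /eqP.
  have [fB|faJ] := adjoint_identity_lowest_factor f_irr f_dj0 f_min.
  - by left; apply: shift_u0.
  - by right; apply: (shift_u0 _ 0%N).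
have high : g %| pshift B j0 \/ g %| pshift (an 0) j0.
  apply: adjoint_identity_highest_factor => // u; rewrite pshift_pshift => /u0_max.
  by rewrite -{2}(addn0 u0) leq_add2l leqn0 => /eqP.
have excl X Y : g %| pshift X j0 -> g %| pshift Y j0 -> coprimep X Y -> False.
  move=> gX gY cXY; have := irredp_coprime_dvdpN g_irr (coprimep_shiftp j0%:R cXY) gX.
  by rewrite gY.
exfalso; case: high => [gB|ga0]; case: low => [gB'|gaJ].
- exact: excl _ _ gB gB' (h2 u0).
- exact: excl _ _ gB gaJ (h4 u0).
- exact: excl _ _ ga0 gB' (h3 u0).
- exact: excl _ _ ga0 gaJ (h1 u0).
Qed.

End AdjointIdentity.

Unset Implicit Arguments.

Theorem theorem3p1 (K : fieldType) (Kchar0 : [pchar K] =i pred0)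
  (F : nat -> K) (J : nat) (J_gt0 : (0 < J)%N)
  (hF : holonomic_of_order F J)
  (a : 'I_J.+1 -> {poly K}) (ha0J : a ord0 * a ord_max != 0)
  (hL : in_ann a F)
  (A B : {poly K})
  (hsum : summable (fun n => peval A n / peval B n * F n))
  (h1 : forall h : nat, coprimep (a ord0) (pshift (a ord_max) h))
  (h2 : forall h : nat, coprimep B (pshift B (J + h)))
  (h3 : forall h : nat, coprimep (a ord0) (pshift B (J + h)))
  (h4 : forall h : nat, coprimep B (pshift (a ord_max) h)) :
  B %| A.
Proof.
have B_neq0 : B != 0.
  apply: contraTneq (h2 0%N) => ->.
  by rewrite /pshift comp_poly0 coprime0p -size_poly_eq1 size_poly0.
have [->|A_neq0] := eqVneq A 0; first exact: dvdp0.
have aJ_neq0 : a ord_max != 0 by apply: contraNneq ha0J => ->; rewrite mulr0.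
destruct J as [|J]; first by [].
pose an i := a (inord i).
have an_ord (i : 'I_J.+2) : an i = a i by rewrite /an inord_val.
have anL : eventually (fun n => \sum_(i < J.+2) peval (an i) n * F (n + i)%N = 0).
  by apply: eventually_mono hL => n aFn; rewrite -[RHS]aFn; apply: eq_bigr => i _; rewrite an_ord.
have [w [rw wJ0 GW]] := summable_certificate Kchar0 A_neq0 B_neq0 hF hsum.
have rAB := rational_seq_div (rational_seq_poly A) (rational_seq_poly B).
have anJ_neq0 : an J.+1 != 0 by rewrite (an_ord ord_max).
have [s rs adj] := adjoint_equation Kchar0 hF anJ_neq0 anL rAB rw
                                    (fun m => wJ0 _ m (leqnn _)) GW.
have [e [d [d_neq0 ced hI]]] := adjoint_identity_of_equation Kchar0 B_neq0 rs adj.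
by apply: (adjoint_identity_dvdp Kchar0 hI ced d_neq0); rewrite ?(an_ord ord0) ?(an_ord ord_max).
Qed.
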